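(* Suppose $\mathcal{G}_k$ is bidirectional for every $k$ and $\{\mathcal{G}_k\}$ is infinitely jointly connected. Consider an algorithm in $\mathcal{A}_{\rm ave}$ for which there is a constant $\alpha_*\in(0,1)$ such that either $\alpha_k\ge\alpha_*$ for all $k$, or $1-\alpha_k-\eta_k\ge\alpha_*$ for all $k$. Then the algorithm achieves global asymptotic consensus.
   Context: Network of nodes $\mathcal{V}=\{1,\dots,n\}$, $n\ge 3$, discrete time, states $x_i(k)\in\mathbb{R}$. At each time $k$ a digraph $\mathcal{G}_k=(\mathcal{V},\mathcal{E}_k)$ is given; $j$ is a neighbor of $i$ at time $k$ if $(j,i)\in\mathcal{E}_k$, every node is always its own neighbor; $\mathcal{N}_i(k)$ is the neighbor set. The algorithm is $$x_i(k+1)=\eta_k x_i(k)+\alpha_k\min_{j\in\mathcal{N}_i(k)}x_j(k)+(1-\eta_k-\alpha_k)\max_{j\in\mathcal{N}_i(k)}x_j(k),$$ with node-independent parameters; $\mathcal{A}_{\rm ave}$ consists of those with $\eta_k\in(0,1]$, $\alpha_k\in[0,1-\eta_k]$ for all $k$. Global asymptotic consensus: for every initial time $k_0\ge0$ and initial value $x(k_0)=x^0\in\mathbb{R}^n$ there is $z_*$ with $x_i(k)\to z_*$ for all $i$. A digraph is bidirectional if $(i,j)\in\mathcal{E}$ iff $(j,i)\in\mathcal{E}$; a bidirectional graph is connected if there is a path between any two nodes. $\mathcal{G}([k,\infty))=(\mathcal{V},\cup_{s\ge k}\mathcal{E}_s)$. A sequence of bidirectional graphs is infinitely jointly connected if $\mathcal{G}([k,\infty))$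 is connected for all $k\ge0$. *)

From Stdlib Require Import Reals Lra Lia List Relations.
Open Scope R_scope.

(* Nodes are the naturals 0..n-1 (the paper's 1..n, shifted).
   A time-varying digraph is E : nat -> nat -> nat -> bool, where
   E k j i = true means (j,i) is an edge of G_k.  Edges involving nodes
   >= n are ignored everywhere. *)

(* min / max over the neighbour set N_i(k) = {i} ∪ {j < n | E k j i}.
   Node i is always its own neighbour; this is built in by starting the
   fold at x i. *)
Definition nbrs (n : nat) (E : nat -> nat -> nat -> bool) (k i : nat) : list nat :=
  filter (fun j => E k j i) (seq 0 n).

Definition nbr_min (n : nat) (E : nat -> nat -> nat -> bool) (k i : nat)
  (x : nat -> R) : R :=
  fold_right (fun j acc => Rmin (x j) acc) (x i) (nbrs n E k i).

Definition nbr_max (n : nat) (E : nat -> nat -> nat -> bool) (k i : nat)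
  (x : nat -> R) : R :=
  fold_right (fun j acc => Rmax (x j) acc) (x i) (nbrs n E k i).

Definition step (n : nat) (E : nat -> nat -> nat -> bool) (eta alpha : nat -> R)
  (k : nat) (x : nat -> R) : nat -> R :=
  fun i => eta k * x i + alpha k * nbr_min n E k i x
           + (1 - eta k - alpha k) * nbr_max n E k i x.

(* traj ... k0 x0 m = state x(k0 + m) when x(k0) = x0. *)
Fixpoint traj (n : nat) (E : nat -> nat -> nat -> bool) (eta alpha : nat -> R)
  (k0 : nat) (x0 : nat -> R) (m : nat) : nat -> R :=
  match m with
  | O => x0
  | S m' => step n E eta alpha (k0 + m') (traj n E eta alpha k0 x0 m')
  end.

Definition global_consensus (n : nat) (E : nat -> nat -> nat -> bool)
  (eta alpha : nat -> R) : Prop :=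
  forall (k0 : nat) (x0 : nat -> R), exists z : R,
    forall i, (i < n)%nat -> Un_cv (fun m => traj n E eta alpha k0 x0 m i) z.

Definition in_A_ave (eta alpha : nat -> R) : Prop :=
  forall k, 0 < eta k <= 1 /\ 0 <= alpha k <= 1 - eta k.

Definition bidirectional_seq (n : nat) (E : nat -> nat -> nat -> bool) : Prop :=
  forall k i j, (i < n)%nat -> (j < n)%nat -> E k i j = E k j i.

Definition union_edge (n : nat) (E : nat -> nat -> nat -> bool) (k : nat)
  (a b : nat) : Prop :=
  (a < n)%nat /\ (b < n)%nat /\ exists s, (k <= s)%nat /\ E s a b = true.

(* A bidirectional graph is connected: a path between any two nodes. *)
Definition inf_jointly_connected (n : nat) (E : nat -> nat -> nat -> bool) : Prop :=
  forall k i j, (i < n)%nat -> (j < n)%nat ->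
    clos_refl_trans nat (union_edge n E k) i j.

From Stdlib Require Import Reals.
From Stdlib Require Import Bool Lra Lia List Relations Classical.
Open Scope R_scope.

(* Each new state is a convex combination of the node's own value and of the minimum and
   maximum over its neighbourhood, so the range of the states never grows.  Assume
   alpha_k >= a.  Fix a time u, an upper bound M of all states, and a "low set" A of nodes
   whose states are <= L.  As long as no edge leaves A, bidirectionality makes A isolated,
   so A stays below L.  Joint connectivity forces such an edge to appear; at that step every
   node with a neighbour in A (A included) is pulled by the minimum weight below
   (1 - a) M + a L.  So A grows strictly while M - L shrinks by the factor a.  Spreading
   from a minimizing node, after at most n rounds every state is below
   M - a^n (M - min): the range contracts by 1 - a^n.  Iterating traps all states in
   geometrically shrinking intervals, hence they converge to a common limit.  The case
   1 - eta_k - alpha_k >= a reduces to the first one by the mirror symmetry x -> -x, which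
   exchanges the minimum and maximum weights. *)

Lemma pow_unit_interval (a : R) (c : nat) : 0 <= a <= 1 -> 0 <= a ^ c <= 1.
Proof.
  intros Ha. split; [apply pow_le; lra|]. rewrite <- (pow1 c). apply pow_incr. lra.
Qed.

Lemma le_toward_upper (a L M : R) (c : nat) :
  0 <= a <= 1 -> L <= M -> L <= M - a ^ c * (M - L).
Proof. intros Ha HLM. pose proof (pow_unit_interval a c Ha). nra. Qed.

Lemma exists_argmin (n : nat) (y : nat -> R) :
  (0 < n)%nat -> exists i0, (i0 < n)%nat /\ forall i, (i < n)%nat -> y i0 <= y i.
Proof.
  induction n as [|n IH]; intros Hn; [lia|].
  destruct (Nat.eq_dec n 0) as [->|Hn0].
  - exists 0%nat. split; [lia|]. intros i Hi. replace i with 0%nat by lia. lra.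
  - destruct (IH ltac:(lia)) as (i0 & Hi0 & Hmin).
    destruct (Rle_dec (y i0) (y n)) as [Hle|Hlt].
    + exists i0. split; [lia|]. intros i Hi.
      destruct (Nat.eq_dec i n) as [->|]; [exact Hle|apply Hmin; lia].
    + exists n. split; [lia|]. intros i Hi.
      destruct (Nat.eq_dec i n) as [->|]; [lra|]. specialize (Hmin i ltac:(lia)). lra.
Qed.

Lemma shrinking_intervals_converge (n : nat) (y : nat -> nat -> R) :
  (0 < n)%nat ->
  (forall eps, 0 < eps -> exists K l, forall t, (K <= t)%nat ->
     forall i, (i < n)%nat -> l <= y t i <= l + eps) ->
  exists z, forall i, (i < n)%nat -> Un_cv (fun t => y t i) z.
Proof.
  intros Hn Hshrink.
  destruct (R_complete (fun t => y t 0%nat)) as [z Hz].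
  { intros eps Heps. destruct (Hshrink (eps / 2) ltac:(lra)) as (K & l & HK).
    exists K. intros t t' Ht Ht'. unfold Rdist.
    destruct (HK t Ht 0%nat Hn), (HK t' Ht' 0%nat Hn). apply Rabs_def1; lra. }
  exists z. intros i Hi eps Heps.
  destruct (Hshrink (eps / 2) ltac:(lra)) as (K & l & HK).
  destruct (Hz (eps / 2) ltac:(lra)) as [N HN].
  exists K. intros t Ht.
  specialize (HN (Nat.max K N) ltac:(lia)). unfold Rdist in *. apply Rabs_def2 in HN.
  destruct (HK t ltac:(lia) i Hi), (HK (Nat.max K N) ltac:(lia) 0%nat Hn).
  apply Rabs_def1; lra.
Qed.

Lemma clos_refl_trans_exit (Rel : nat -> nat -> Prop) (P : nat -> Prop) (x y : nat) :
  clos_refl_trans nat Rel x y -> P x -> ~ P y -> exists a b, Rel a b /\ P a /\ ~ P b.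
Proof.
  induction 1 as [x y H|x|x y z _ IH1 _ IH2]; intros Px Py.
  - exists x, y; auto.
  - contradiction.
  - destruct (classic (P y)); [apply IH2|apply IH1]; auto.
Qed.

Lemma fold_max_le_iff (f : nat -> R) (d B : R) (l : list nat) :
  fold_right (fun j acc => Rmax (f j) acc) d l <= B <->
  d <= B /\ (forall j, In j l -> f j <= B).
Proof.
  induction l as [|h t IH]; simpl; [intuition|].
  set (m := fold_right (fun j acc => Rmax (f j) acc) d t) in *. split.
  - intros Hle. pose proof (Rmax_l (f h) m). pose proof (Rmax_r (f h) m).
    destruct (proj1 IH ltac:(lra)) as [Hd Hl].
    split; [exact Hd|]. intros j [<-|Hj]; [lra|auto].
  - intros [Hd Hl]. apply Rmax_lub; [auto|]. apply IH; auto.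
Qed.

Lemma fold_min_ge_iff (f : nat -> R) (d B : R) (l : list nat) :
  B <= fold_right (fun j acc => Rmin (f j) acc) d l <->
  B <= d /\ (forall j, In j l -> B <= f j).
Proof.
  induction l as [|h t IH]; simpl; [intuition|].
  set (m := fold_right (fun j acc => Rmin (f j) acc) d t) in *. split.
  - intros Hle. pose proof (Rmin_l (f h) m). pose proof (Rmin_r (f h) m).
    destruct (proj1 IH ltac:(lra)) as [Hd Hl].
    split; [exact Hd|]. intros j [<-|Hj]; [lra|auto].
  - intros [Hd Hl]. apply Rmin_glb; [auto|]. apply IH; auto.
Qed.

Lemma fold_min_mirror (f g : nat -> R) (d e : R) (l : list nat) :
  (forall j, g j = - f j) -> e = - d ->
  fold_right (fun j acc => Rmin (g j) acc) e l = - fold_right (fun j acc => Rmax (f j) acc) d l.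
Proof.
  intros Hg He. induction l as [|h t IH]; simpl; [exact He|].
  now rewrite IH, Hg, Ropp_Rmax.
Qed.

Lemma fold_max_mirror (f g : nat -> R) (d e : R) (l : list nat) :
  (forall j, g j = - f j) -> e = - d ->
  fold_right (fun j acc => Rmax (g j) acc) e l = - fold_right (fun j acc => Rmin (f j) acc) d l.
Proof.
  intros Hg He. induction l as [|h t IH]; simpl; [exact He|].
  now rewrite IH, Hg, Ropp_Rmin.
Qed.

Lemma in_nbrs n E k i j : In j (nbrs n E k i) <-> (j < n)%nat /\ E k j i = true.
Proof. unfold nbrs. rewrite filter_In, in_seq. split; intros [H1 H2]; split; auto; lia. Qed.

Lemma nbr_max_le_iff n E k i x B :
  nbr_max n E k i x <= B <->
  x i <= B /\ (forall j, (j < n)%nat -> E k j i = true -> x j <= B).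
Proof. unfold nbr_max. rewrite fold_max_le_iff. setoid_rewrite in_nbrs. firstorder. Qed.

Lemma nbr_min_ge_iff n E k i x B :
  B <= nbr_min n E k i x <->
  B <= x i /\ (forall j, (j < n)%nat -> E k j i = true -> B <= x j).
Proof. unfold nbr_min. rewrite fold_min_ge_iff. setoid_rewrite in_nbrs. firstorder. Qed.

Lemma nbr_min_le_self n E k i x : nbr_min n E k i x <= x i.
Proof. exact (proj1 (proj1 (nbr_min_ge_iff n E k i x _) (Rle_refl _))). Qed.

Lemma nbr_min_le_nbr n E k i x j :
  (j < n)%nat -> E k j i = true -> nbr_min n E k i x <= x j.
Proof. exact (proj2 (proj1 (nbr_min_ge_iff n E k i x _) (Rle_refl _)) j). Qed.

Lemma nbr_max_ge_self n E k i x : x i <= nbr_max n E k i x.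
Proof. exact (proj1 (proj1 (nbr_max_le_iff n E k i x _) (Rle_refl _))). Qed.

Definition bounded_on (n : nat) (A : nat -> bool) (x : nat -> R) (L : R) : Prop :=
  forall i, (i < n)%nat -> A i = true -> x i <= L.

Definition crossing (n : nat) (E : nat -> nat -> nat -> bool) (k : nat) (A : nat -> bool) : Prop :=
  exists a b, (a < n)%nat /\ (b < n)%nat /\ A a = true /\ A b = false /\ E k a b = true.

Definition expand (n : nat) (E : nat -> nat -> nat -> bool) (k : nat) (A : nat -> bool) : nat -> bool :=
  fun i => A i || existsb (fun j => A j && E k j i) (seq 0 n).

Definition members (n : nat) (A : nat -> bool) : nat := length (filter A (seq 0 n)).

Lemma members_le n A : (members n A <= n)%nat.
Proof. unfold members. rewrite <- (length_seq n 0) at 2. apply filter_length_le. Qed.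

Lemma members_grow n A B b :
  (forall i, (i < n)%nat -> A i = true -> B i = true) ->
  (b < n)%nat -> A b = false -> B b = true -> (members n A < members n B)%nat.
Proof.
  intros Hsub Hb Ab Bb. unfold members.
  assert (Hincl : incl (filter A (seq 0 n)) (filter B (seq 0 n))).
  { intros i Hi. apply filter_In in Hi as [Hi Ai]. apply filter_In.
    split; [exact Hi|]. apply Hsub; [apply in_seq in Hi; lia|exact Ai]. }
  destruct (Nat.lt_ge_cases (length (filter A (seq 0 n))) (length (filter B (seq 0 n))))
    as [Hlt|Hle]; [exact Hlt|exfalso].
  assert (Hb' : In b (filter A (seq 0 n))).
  { apply (NoDup_length_incl (NoDup_filter _ (seq_NoDup _ _)) Hle Hincl).
    apply filter_In. split; [apply in_seq; lia|exact Bb]. }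
  apply filter_In in Hb' as [_ Hb']. congruence.
Qed.

Lemma expand_grows n E k A :
  crossing n E k A -> (members n A < members n (expand n E k A))%nat.
Proof.
  intros (a & b & Ha & Hb & Aa & Ab & Eab).
  apply members_grow with b; auto.
  - intros i _ Ai. unfold expand. now rewrite Ai.
  - unfold expand. rewrite Ab. simpl. apply existsb_exists.
    exists a. rewrite in_seq, Aa, Eab. split; [lia|reflexivity].
Qed.

Lemma crossing_recurs n E A i0 j0 k :
  inf_jointly_connected n E -> (i0 < n)%nat -> (j0 < n)%nat ->
  A i0 = true -> A j0 = false -> exists s, (k <= s)%nat /\ crossing n E s A.
Proof.
  intros Hcon Hi0 Hj0 Ai0 Aj0.
  destruct (clos_refl_trans_exit _ (fun i => A i = true) i0 j0 (Hcon k i0 j0 Hi0 Hj0) Ai0)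
    as (a & b & (Ha & Hb & s & Hs & Eab) & Aa & Ab); [congruence|].
  exists s. split; [exact Hs|]. exists a, b. repeat split; auto.
  now apply not_true_is_false.
Qed.

Section Step.
Variables (n : nat) (E : nat -> nat -> nat -> bool) (eta alpha : nat -> R).
Hypothesis Hpar : in_A_ave eta alpha.

Lemma step_between k x i :
  nbr_min n E k i x <= step n E eta alpha k x i <= nbr_max n E k i x.
Proof.
  destruct (Hpar k) as [He Ha]. unfold step.
  pose proof (nbr_min_le_self n E k i x). pose proof (nbr_max_ge_self n E k i x).
  nra.
Qed.

Lemma step_pulled_down a k x i : 0 <= a -> alpha k >= a ->
  step n E eta alpha k x i <= (1 - a) * nbr_max n E k i x + a * nbr_min n E k i x.
Proof.
  intros Ha0 Haa. destruct (Hpar k) as [He Ha]. unfold step.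
  pose proof (nbr_min_le_self n E k i x). pose proof (nbr_max_ge_self n E k i x).
  nra.
Qed.

(* Without a crossing edge, a low set stays low (bidirectionality: no edge enters it). *)
Lemma step_keeps_low_set k A x L :
  bidirectional_seq n E -> ~ crossing n E k A ->
  bounded_on n A x L -> bounded_on n A (step n E eta alpha k x) L.
Proof.
  intros Hbi Hcross Hx i Hi Ai.
  eapply Rle_trans; [apply step_between|].
  apply nbr_max_le_iff. split; [auto|].
  intros j Hj Eji. destruct (A j) eqn:Aj; [auto|].
  exfalso. apply Hcross. exists i, j. rewrite Hbi; auto.
Qed.

Lemma step_expands_low_set a k A x L M :
  0 <= a <= 1 -> alpha k >= a -> (forall i, (i < n)%nat -> x i <= M) ->
  bounded_on n A x L ->
  bounded_on n (expand n E k A) (step n E eta alpha k x) ((1 - a) * M + a * L).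
Proof.
  intros Ha Haa HM Hx i Hi Ei.
  assert (Hmin : nbr_min n E k i x <= L).
  { unfold expand in Ei. apply orb_true_iff in Ei as [Ai|Hex].
    - eapply Rle_trans; [apply nbr_min_le_self|auto].
    - apply existsb_exists in Hex as (j & Hj & Hj2).
      apply andb_true_iff in Hj2 as [Aj Eji]. apply in_seq in Hj.
      apply Rle_trans with (x j); [apply nbr_min_le_nbr|apply Hx]; auto; lia. }
  assert (Hmax : nbr_max n E k i x <= M) by (apply nbr_max_le_iff; split; auto).
  eapply Rle_trans; [apply (step_pulled_down a); lra|].
  assert ((1 - a) * nbr_max n E k i x <= (1 - a) * M) by (apply Rmult_le_compat_l; lra).
  assert (a * nbr_min n E k i x <= a * L) by (apply Rmult_le_compat_l; lra).
  lra.
Qed.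
End Step.

Section Trajectory.
Variables (n : nat) (E : nat -> nat -> nat -> bool) (eta alpha : nat -> R)
  (k0 : nat) (x0 : nat -> R).
Hypotheses (Hpar : in_A_ave eta alpha) (Hbi : bidirectional_seq n E)
  (Hcon : inf_jointly_connected n E).
Local Notation X := (traj n E eta alpha k0 x0).

Lemma traj_upper_invariant u h :
  (forall i, (i < n)%nat -> X u i <= h) ->
  forall t, (u <= t)%nat -> forall i, (i < n)%nat -> X t i <= h.
Proof.
  intros Hu t Ht. induction Ht as [|t Ht IH]; intros i Hi; [auto|]. simpl.
  eapply Rle_trans; [apply (step_between n E eta alpha Hpar)|].
  apply nbr_max_le_iff. auto.
Qed.

Lemma traj_lower_invariant u l :
  (forall i, (i < n)%nat -> l <= X u i) ->
  forall t, (u <= t)%nat -> forall i, (i < n)%nat -> l <= X t i.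
Proof.
  intros Hu t Ht. induction Ht as [|t Ht IH]; intros i Hi; [auto|]. simpl.
  eapply Rle_trans; [|apply (step_between n E eta alpha Hpar)].
  apply nbr_min_ge_iff. auto.
Qed.

Lemma low_set_until_crossing A L :
  forall d u, bounded_on n A (X u) L -> crossing n E (k0 + (u + d)) A ->
  exists s, (u <= s <= u + d)%nat /\ crossing n E (k0 + s) A /\ bounded_on n A (X s) L.
Proof.
  intros d. induction d as [|d IH]; intros u Hu Hcross.
  - exists u. rewrite Nat.add_0_r in *. repeat split; auto; lia.
  - destruct (classic (crossing n E (k0 + u) A)) as [Hnow|Hnot].
    + exists u. repeat split; auto; lia.
    + destruct (IH (S u)) as (s & Hs & Hc & Hb).
      * now apply (step_keeps_low_set n E eta alpha Hpar).
      * now replace (k0 + (S u + d))%nat with (k0 + (u + S d))%nat by lia.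
      * exists s. repeat split; auto; lia.
Qed.

Lemma first_crossing A L u i0 j0 :
  (i0 < n)%nat -> (j0 < n)%nat -> A i0 = true -> A j0 = false ->
  bounded_on n A (X u) L ->
  exists s, (u <= s)%nat /\ crossing n E (k0 + s) A /\ bounded_on n A (X s) L.
Proof.
  intros Hi0 Hj0 Ai0 Aj0 Hu.
  destruct (crossing_recurs n E A i0 j0 (k0 + u) Hcon Hi0 Hj0 Ai0 Aj0) as (s & Hs & Hcross).
  destruct (low_set_until_crossing A L (s - k0 - u) u Hu) as (s' & Hs' & Hc & Hb).
  - now replace (k0 + (u + (s - k0 - u)))%nat with s by lia.
  - exists s'. repeat split; auto; lia.
Qed.

Section MinWeight.
Variable a : R.
Hypotheses (Ha : 0 <= a <= 1) (Halpha : forall k, alpha k >= a).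

(* Spreading: a nonempty low set reaches every node within [n - |A|] crossings, its
   distance to the upper bound [M] shrinking by the factor [a] at each crossing. *)
Lemma low_set_spreads :
  forall c u A L M,
  (n - members n A <= c)%nat -> (exists i0, (i0 < n)%nat /\ A i0 = true) -> L <= M ->
  (forall i, (i < n)%nat -> X u i <= M) -> bounded_on n A (X u) L ->
  exists K, (u <= K)%nat /\ forall i, (i < n)%nat -> X K i <= M - a ^ c * (M - L).
Proof.
  intros c. induction c as [|c IH]; intros u A L M Hc (i0 & Hi0 & Ai0) HLM HM HL.
  all: destruct (classic (exists j0, (j0 < n)%nat /\ A j0 = false))
         as [(j0 & Hj0 & Aj0)|Hfull].
  (* When [A] already contains every node, the bound holds at time [u]. *)
  2, 4: exists u; split; [lia|]; intros i Hi;
        assert (Ai : A i = true) by (apply not_false_is_true; intros Ai; eauto);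
        eapply Rle_trans; [exact (HL i Hi Ai)|now apply le_toward_upper].
  - pose proof (members_grow n A (fun _ => true) j0 (fun _ _ _ => eq_refl) Hj0 Aj0 eq_refl).
    pose proof (members_le n (fun _ => true)). lia.
  - destruct (first_crossing A L u i0 j0 Hi0 Hj0 Ai0 Aj0 HL) as (s & Hs & Hcross & Hlow).
    assert (HMs : forall i, (i < n)%nat -> X s i <= M)
      by (intros; eapply traj_upper_invariant; eauto).
    assert (Hgrow := expand_grows n E (k0 + s) A Hcross).
    destruct (IH (S s) (expand n E (k0 + s) A) ((1 - a) * M + a * L) M) as (K & HK & HXK).
    + lia.
    + exists i0. split; [exact Hi0|]. unfold expand. now rewrite Ai0.
    + nra.
    + intros i Hi. eapply traj_upper_invariant; eauto.
    + exact (step_expands_low_set n E eta alpha Hpar a (k0 + s) A (X s) L M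
               Ha (Halpha _) HMs Hlow).
    + exists K. split; [lia|]. intros i Hi. specialize (HXK i Hi). simpl. lra.
Qed.

(* Spreading from a minimizing node contracts the range of the states by [1 - a ^ n]. *)
Lemma interval_contracts :
  (0 < n)%nat ->
  forall u l h, (forall i, (i < n)%nat -> l <= X u i <= h) ->
  exists K l', forall t, (K <= t)%nat -> forall i, (i < n)%nat ->
    l' <= X t i <= l' + (1 - a ^ n) * (h - l).
Proof.
  intros Hn u l h Hu.
  destruct (exists_argmin n (X u) Hn) as (i0 & Hi0 & Hmin).
  destruct (low_set_spreads n u (fun i => Nat.eqb i i0) (X u i0) h) as (K & HuK & HK).
  - lia.
  - exists i0. split; [exact Hi0|apply Nat.eqb_refl].
  - apply Hu; exact Hi0.
  - intros i Hi. apply Hu; exact Hi.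
  - intros i _ Hi. apply Nat.eqb_eq in Hi. subst. lra.
  - exists K, (X u i0). intros t Ht i Hi.
    pose proof (pow_unit_interval a n Ha). destruct (Hu i0 Hi0).
    split; [eapply traj_lower_invariant; eauto; lia|].
    apply Rle_trans with (h - a ^ n * (h - X u i0)); [|nra].
    eapply traj_upper_invariant; eauto.
Qed.

Lemma intervals_shrink_geometrically :
  (0 < n)%nat ->
  forall l0 h0, (forall i, (i < n)%nat -> l0 <= X 0 i <= h0) ->
  forall m, exists K l, forall t, (K <= t)%nat -> forall i, (i < n)%nat ->
    l <= X t i <= l + (1 - a ^ n) ^ m * (h0 - l0).
Proof.
  intros Hn l0 h0 H0 m. induction m as [|m (K & l & HK)].
  - exists 0%nat, l0. intros t Ht i Hi. simpl. rewrite Rmult_1_l.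
    replace (l0 + (h0 - l0)) with h0 by ring. split.
    + eapply traj_lower_invariant; eauto. intros j Hj. apply H0, Hj.
    + eapply traj_upper_invariant; eauto. intros j Hj. apply H0, Hj.
  - destruct (interval_contracts Hn K l (l + (1 - a ^ n) ^ m * (h0 - l0)))
      as (K' & l' & HK'); [intros i Hi; apply HK; auto|].
    exists K', l'. intros t Ht i Hi.
    replace ((1 - a ^ n) ^ S m * (h0 - l0))
      with ((1 - a ^ n) * (l + (1 - a ^ n) ^ m * (h0 - l0) - l)) by (simpl; ring).
    exact (HK' t Ht i Hi).
Qed.

Lemma consensus_min_weight :
  (0 < n)%nat -> 0 < a ->
  exists z, forall i, (i < n)%nat -> Un_cv (fun t => X t i) z.
Proof.
  intros Hn Hapos.
  destruct (exists_argmin n (X 0) Hn) as (ilo & Hilo & Hlo).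
  destruct (exists_argmin n (fun i => - X 0 i) Hn) as (ihi & Hihi & Hhi).
  set (D := X 0 ihi - X 0 ilo).
  assert (HD : 0 <= D) by (unfold D; specialize (Hlo ihi Hihi); lra).
  assert (Hgeo := intervals_shrink_geometrically Hn (X 0 ilo) (X 0 ihi)
    (fun i Hi => conj (Hlo i Hi) (Ropp_le_cancel _ _ (Hhi i Hi)))).
  apply shrinking_intervals_converge; [exact Hn|]. intros eps Heps.
  assert (Hq : 0 <= 1 - a ^ n < 1).
  { pose proof (pow_unit_interval a n Ha). pose proof (pow_lt a n Hapos). lra. }
  destruct (pow_lt_1_zero (1 - a ^ n) ltac:(rewrite Rabs_right; lra) (eps / (D + 1)))
    as [m Hm]; [apply Rdiv_lt_0_compat; lra|].
  specialize (Hm m (le_n m)). rewrite Rabs_right in Hm by (apply Rle_ge, pow_le; lra).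
  assert (Hsmall : (1 - a ^ n) ^ m * D < eps).
  { apply Rle_lt_trans with ((1 - a ^ n) ^ m * (D + 1)).
    - apply Rmult_le_compat_l; [apply pow_le|]; lra.
    - apply Rmult_lt_reg_r with (/ (D + 1)); [apply Rinv_0_lt_compat; lra|].
      rewrite Rmult_assoc, Rinv_r by lra. unfold Rdiv in Hm. lra. }
  destruct (Hgeo m) as (K & l & HK). exists K, l. intros t Ht i Hi.
  destruct (HK t Ht i Hi) as [Hl Hh]. fold D in Hh. lra.
Qed.
End MinWeight.
End Trajectory.

Lemma traj_mirror n E eta alpha k0 x0 t i :
  traj n E eta (fun k => 1 - eta k - alpha k) k0 (fun j => - x0 j) t i =
  - traj n E eta alpha k0 x0 t i.
Proof.
  revert i. induction t as [|t IH]; intros i; [reflexivity|]. simpl.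
  unfold step, nbr_min, nbr_max.
  rewrite (fold_min_mirror _ _ _ _ _ IH (IH i)), (fold_max_mirror _ _ _ _ _ IH (IH i)), IH.
  ring.
Qed.

Lemma consensus_mirror n E eta alpha :
  global_consensus n E eta (fun k => 1 - eta k - alpha k) -> global_consensus n E eta alpha.
Proof.
  intros Hc k0 x0. destruct (Hc k0 (fun j => - x0 j)) as [z Hz].
  exists (- z). intros i Hi eps Heps. destruct (Hz i Hi eps Heps) as [N HN].
  exists N. intros m Hm. specialize (HN m Hm). rewrite traj_mirror in HN.
  unfold Rdist in *.
  replace (traj n E eta alpha k0 x0 m i - - z)
    with (- (- traj n E eta alpha k0 x0 m i - z)) by ring.
  now rewrite Rabs_Ropp.
Qed.

Theorem theorem6 (n : nat) (E : nat -> nat -> nat -> bool) (eta alpha : nat -> R)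
  (astar : R) :
  (3 <= n)%nat ->
  bidirectional_seq n E ->
  inf_jointly_connected n E ->
  in_A_ave eta alpha ->
  0 < astar < 1 ->
  ((forall k, alpha k >= astar) \/ (forall k, 1 - alpha k - eta k >= astar)) ->
  global_consensus n E eta alpha.
Proof.
  intros Hn Hbi Hcon Hpar Hastar [Hmin|Hmax].
  - intros k0 x0.
    apply (consensus_min_weight n E eta alpha k0 x0 Hpar Hbi Hcon astar); auto; [lra|lia|lra].
  - (* The mirrored algorithm has minimum weight [1 - eta_k - alpha_k >= astar]. *)
    apply consensus_mirror. intros k0 x0.
    assert (Hpar' : in_A_ave eta (fun k => 1 - eta k - alpha k)).
    { intros k. destruct (Hpar k). lra. }
    apply (consensus_min_weight n E eta _ k0 x0 Hpar' Hbi Hcon astar); [lra| |lia|lra].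
    intros k. specialize (Hmax k). lra.
Qed.
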